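(* Let $G$ be a simple connected bipartite graph on $n\ge 3$ vertices with maximum degree $\Delta\le n-2$ and Wiener index $W$. Suppose $\deg(v_1)=\cdots=\deg(v_k)=\Delta$ for some $1\le k\le n$, and for $1\le i\le k$ let $a_i=4(W-D_i-t_{v_i}\Delta)(\Delta+1)+2n\Delta^{2}+nD_i+nt_{v_i}\Delta$ and $b_i=4D_i^{2}+8D_it_{v_i}\Delta+4t_{v_i}^{2}\Delta^{2}-8W\Delta^{2}-4WD_i-4Wt_{v_i}\Delta$. Then (i) $\displaystyle q^{\mathcal{D}}(G)\ge \max_{1\le i\le k}\frac{a_i+\sqrt{a_i^{2}+4b_i(1+\Delta)(n-\Delta-1)}}{2(1+\Delta)(n-\Delta-1)}$; (ii) $\displaystyle q^{\mathcal{D}}_{min}(G)\le \min_{1\le i\le k}\frac{a_i-\sqrt{a_i^{2}+4b_i(1+\Delta)(n-\Delta-1)}}{2(1+\Delta)(n-\Delta-1)}$.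
   Context: $G$ has vertex set $\{v_1,\dots,v_n\}$; $d_G$ is the graph distance; $\mathcal{D}(G)=(d_G(v_i,v_j))$. $D_i=\sum_{j\ne i}d_G(v_i,v_j)$ is the transmission of $v_i$, $Tr(G)=\mathrm{diag}(D_1,\dots,D_n)$, $\mathcal{Q}(G)=Tr(G)+\mathcal{D}(G)$. $W=\sum_{i<j}d_G(v_i,v_j)$. For a vertex $v$ of degree $d_v$, $t_v=\frac{1}{d_v}\sum_{v_j\sim v}D_j$. $q^{\mathcal{D}}(G)$, $q^{\mathcal{D}}_{min}(G)$ are the largest and least eigenvalues of $\mathcal{Q}(G)$. *)

From HB Require Import structures.
From mathcomp Require Import all_boot all_order all_algebra.
From mathcomp Require Import reals.
Set Implicit Arguments. Unset Strict Implicit. Unset Printing Implicit Defensive.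
Import Order.TTheory GRing.Theory Num.Theory.

(* A simple graph on the vertex set 'I_n (vertex v_{i+1} is the ordinal i),
   given by an adjacency relation [adj]. *)
Definition simple_graph (n : nat) (adj : rel 'I_n) : Prop :=
  symmetric adj /\ irreflexive adj.

Definition connected_graph (n : nat) (adj : rel 'I_n) : Prop :=
  forall u v, connect adj u v.

Definition bipartite_graph (n : nat) (adj : rel 'I_n) : Prop :=
  exists A : {set 'I_n}, forall u v, adj u v -> (u \in A) != (v \in A).

Definition deg (n : nat) (adj : rel 'I_n) (v : 'I_n) : nat :=
  #|[set w | adj v w]|.

Definition max_deg (n : nat) (adj : rel 'I_n) : nat :=
  \max_(v : 'I_n) deg adj v.

Definition walk_len (n : nat) (adj : rel 'I_n) (m : nat) (u v : 'I_n) : bool :=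
  [exists p : m.-tuple 'I_n, path adj u p && (last u p == v)].

(* graph distance: the least m such that there is a walk of length m from u to v
   (for a connected graph on n vertices it is < n) *)
Definition gdist (n : nat) (adj : rel 'I_n) (u v : 'I_n) : nat :=
  find (fun m => walk_len adj m u v) (iota 0 n).

Local Open Scope ring_scope.
Section Quantities.
Variables (R : realType) (n : nat) (adj : rel 'I_n).

Definition transmission (i : 'I_n) : R :=
  \sum_(j : 'I_n | j != i) (gdist adj i j)%:R.

Definition wiener : R :=
  \sum_(i : 'I_n) \sum_(j : 'I_n | (i < j)%N) (gdist adj i j)%:R.

Definition tv (v : 'I_n) : R :=
  (deg adj v)%:R^-1 * \sum_(j : 'I_n | adj v j) transmission j.

Definition distQ : 'M[R]_n :=
  \matrix_(i, j) ((i == j)%:R * transmission i + (gdist adj i j)%:R).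

Definition largest_eig (M : 'M[R]_n) (q : R) : Prop :=
  eigenvalue M q /\ forall mu, eigenvalue M mu -> mu <= q.

Definition least_eig (M : 'M[R]_n) (q : R) : Prop :=
  eigenvalue M q /\ forall mu, eigenvalue M mu -> q <= mu.

End Quantities.

From HB Require Import structures.
From mathcomp Require Import all_boot all_order all_algebra.
From mathcomp Require Import reals complex ring lra zify.
Set Implicit Arguments. Unset Strict Implicit. Unset Printing Implicit Defensive.
Import Order.TTheory GRing.Theory Num.Theory.
Local Open Scope ring_scope.

(* For a vertex v put X = {v} u N(v) and let S be the symmetric 2 x 2 matrix of
   the block sums of Q(G) over the partition (X, V \ X).  In a bipartite graph two
   neighbours of v are at distance 2, so the entries of S are explicit in n, deg v,
   W, D_v and t_v, and c mu^2 - a mu - b = det (mu diag(|X|, |V \ X|) - S).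
   For each root mu, the vector equal to s12 on X and to mu |X| - s11 off X has
   Rayleigh quotient exactly mu; as Q(G) is symmetric, mu therefore lies between its
   least and largest eigenvalues. *)

Section BilinearForm.
Variables (R : comNzRingType) (n : nat).
Implicit Types (A : 'M[R]_n) (x y : 'rV[R]_n) (X Y : {set 'I_n}).

Definition bilin A x y : R := (x *m A *m y^T) 0 0.

Definition blocksum A X Y : R := \sum_(i in X) \sum_(j in Y) A i j.

Definition indvec X : 'rV[R]_n := \row_j (j \in X)%:R.

Definition blockvec X (al be : R) : 'rV[R]_n :=
  \row_j (if j \in X then al else be).

Definition rayleigh_value A mu : Prop :=
  exists2 x, x != 0 & bilin A x x = mu * bilin 1%:M x x.

Lemma bilinDl A x1 x2 y : bilin A (x1 + x2) y = bilin A x1 y + bilin A x2 y.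
Proof. by rewrite /bilin !mulmxDl mxE. Qed.

Lemma bilinDr A x y1 y2 : bilin A x (y1 + y2) = bilin A x y1 + bilin A x y2.
Proof. by rewrite /bilin linearD /= mulmxDr mxE. Qed.

Lemma bilinZl A a x y : bilin A (a *: x) y = a * bilin A x y.
Proof. by rewrite /bilin -!scalemxAl mxE. Qed.

Lemma bilinZr A a x y : bilin A x (a *: y) = a * bilin A x y.
Proof. by rewrite /bilin linearZ /= -scalemxAr mxE. Qed.

Lemma bilin_indvec A X Y : bilin A (indvec X) (indvec Y) = blocksum A X Y.
Proof.
rewrite /bilin /blocksum mxE exchange_big /= [RHS]big_mkcond /=.
apply: eq_bigr => j _; rewrite !mxE; case: (j \in Y); rewrite ?mulr0 // mulr1.
rewrite [RHS]big_mkcond /=; apply: eq_bigr => i _; rewrite mxE.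
by case: (i \in X); rewrite ?mul1r ?mul0r.
Qed.

Lemma blockvecE X al be : blockvec X al be = al *: indvec X + be *: indvec (~: X).
Proof.
by apply/rowP => j; rewrite !mxE inE; case: (j \in X); rewrite /= ?mulr1 ?mulr0 ?addr0 ?add0r.
Qed.

Lemma bilin_blockvec A X al be :
  bilin A (blockvec X al be) (blockvec X al be) =
  al ^+ 2 * blocksum A X X + al * be * (blocksum A X (~: X) + blocksum A (~: X) X)
  + be ^+ 2 * blocksum A (~: X) (~: X).
Proof.
rewrite blockvecE !bilinDl !bilinDr !bilinZl !bilinZr !bilin_indvec; ring.
Qed.

Lemma blockvec_neq0 X al be i : i \in X -> al != 0 -> blockvec X al be != 0.
Proof.
by move=> Xi; apply: contra_neq => /rowP/(_ i); rewrite !mxE Xi.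
Qed.

Lemma blocksumD A B X Y : blocksum (A + B) X Y = blocksum A X Y + blocksum B X Y.
Proof.
rewrite /blocksum -big_split; apply: eq_bigr => i _.
by rewrite -big_split; apply: eq_bigr => j _; rewrite mxE.
Qed.

Lemma blocksum_diag d X Y : blocksum (diag_mx d) X Y = \sum_(i in X :&: Y) d 0 i.
Proof.
rewrite (eq_bigl (fun i => (i \in X) && (i \in Y))) => [|i]; last by rewrite inE.
rewrite big_mkcondr /blocksum; apply: eq_bigr => i _.
case: ifP => [Yi|/negbT Yi].
  rewrite (bigD1 i) //= mxE eqxx big1 ?addr0 // => j /andP[_ /negbTE].
  by rewrite mxE eq_sym => ->.
rewrite big1 // => j Yj; rewrite mxE.
by have /negbTE -> : i != j by apply: contraNneq Yi => ->.
Qed.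

Lemma blocksum1 X Y : blocksum 1%:M X Y = #|X :&: Y|%:R.
Proof. by rewrite -diag_const_mx blocksum_diag -sumr_const; apply: eq_bigr => i _; rewrite mxE. Qed.

Lemma blocksum_tr A X Y : blocksum A^T X Y = blocksum A Y X.
Proof.
by rewrite /blocksum exchange_big; apply: eq_bigr => j _; apply: eq_bigr => i _; rewrite mxE.
Qed.

Lemma blocksum_setCr A X Y : blocksum A X Y + blocksum A X (~: Y) = blocksum A X setT.
Proof.
by rewrite /blocksum -big_split; apply: eq_bigr => i _; rewrite [RHS](big_setID Y) setTI setTD.
Qed.

Lemma blocksum_setCl A X Y : blocksum A X Y + blocksum A (~: X) Y = blocksum A setT Y.
Proof. by rewrite /blocksum [RHS](big_setID X) setTI setTD. Qed.

Definition block_charpoly (p r s11 s12 s22 mu : R) : R :=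
  (mu * p - s11) * (mu * r - s22) - s12 ^+ 2.

Lemma blockvec_rayleigh A X mu : A^T = A ->
  let s11 := blocksum A X X in let s12 := blocksum A X (~: X) in
  let s22 := blocksum A (~: X) (~: X) in
  let x := blockvec X s12 (mu * #|X|%:R - s11) in
  block_charpoly #|X|%:R #|~: X|%:R s11 s12 s22 mu = 0 ->
  bilin A x x = mu * bilin 1%:M x x.
Proof.
move=> A_sym s11 s12 s22 x root_mu.
have s21E : blocksum A (~: X) X = s12 by rewrite -[in LHS]A_sym blocksum_tr.
(* bilin A x x - mu * bilin 1%:M x x = (s11 - mu * #|X|) * block_charpoly ... mu. *)
apply/eqP; rewrite -subr_eq0 !bilin_blockvec s21E !blocksum1 !setIid setICr setIC setICr.
apply/eqP; rewrite -[RHS](mulr0 (s11 - mu * #|X|%:R)) -root_mu.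
by rewrite /block_charpoly /s11 /s12 /s22 cards0; ring.
Qed.

End BilinearForm.

Lemma block_charpoly_roots (R : rcfType) (p r s11 s12 s22 : R) : 0 < p * r ->
  let a := r * s11 + p * s22 in let b := s12 ^+ 2 - s11 * s22 in let c := p * r in
  let s := Num.sqrt (a ^+ 2 + 4 * b * c) in
  block_charpoly p r s11 s12 s22 ((a + s) / (2 * c)) = 0 /\
  block_charpoly p r s11 s12 s22 ((a - s) / (2 * c)) = 0.
Proof.
move=> c_gt0 a b c s; have c_ge0 : 0 <= c := ltW c_gt0.
have discrE : a ^+ 2 + 4 * b * c = (r * s11 - p * s22) ^+ 2 + 4 * c * s12 ^+ 2.
  by rewrite /a /b /c; ring.
have s_sq : s ^+ 2 = a ^+ 2 + 4 * b * c.
  by rewrite sqr_sqrtr // discrE addr_ge0 ?sqr_ge0 // mulr_ge0 ?sqr_ge0 // mulr_ge0.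
have root e : e ^+ 2 = a ^+ 2 + 4 * b * c ->
    block_charpoly p r s11 s12 s22 ((a + e) / (2 * c)) = 0.
  move=> e_sq; have pr_neq0 : p * r != 0 by rewrite gt_eqF.
  have -> : block_charpoly p r s11 s12 s22 ((a + e) / (2 * c)) =
      (e ^+ 2 - (a ^+ 2 + 4 * b * c)) / (4 * c).
    by rewrite /block_charpoly /a /b /c; field; move: pr_neq0; rewrite mulf_eq0 negb_or andbC.
  by rewrite e_sq subrr mul0r.
by split; apply: root; rewrite ?sqrrN s_sq.
Qed.

Lemma eigenvalue_opp (R : fieldType) n (A : 'M[R]_n) mu :
  eigenvalue (- A) (- mu) = eigenvalue A mu.
Proof.
apply/eigenvalueP/eigenvalueP => -[x xA x_neq0]; exists x => //.
  by apply: oppr_inj; rewrite -mulmxN xA scaleNr.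
by rewrite mulmxN xA scaleNr.
Qed.

Section RealRayleigh.
Variables (R : realFieldType) (n : nat).
Implicit Types (A : 'M[R]_n) (x : 'rV[R]_n).

Lemma bilin1_gt0 x : x != 0 -> 0 < bilin 1%:M x x.
Proof.
have bilin1E : bilin 1%:M x x = \sum_j x 0 j ^+ 2.
  by rewrite /bilin mulmx1 mxE; apply: eq_bigr => j _; rewrite mxE expr2.
move=> x_neq0; rewrite bilin1E lt_def sumr_ge0 ?andbT => [|j _]; last exact: sqr_ge0.
apply: contra x_neq0; rewrite psumr_eq0 => [/allP x0|j _]; last exact: sqr_ge0.
apply/eqP/rowP => j; rewrite mxE; apply/eqP.
by rewrite -sqrf_eq0; exact: (x0 j (mem_index_enum j)).
Qed.

Lemma bilinN A x y : bilin (- A) x y = - bilin A x y.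
Proof. by rewrite /bilin mulmxN mulNmx mxE. Qed.

Lemma rayleigh_le A q mu :
  (forall x, bilin A x x <= q * bilin 1%:M x x) -> rayleigh_value A mu -> mu <= q.
Proof. by move=> A_ub [x /bilin1_gt0 x_gt0 xA]; rewrite -(ler_pM2r x_gt0) -xA. Qed.

Lemma rayleigh_valueN A mu : rayleigh_value A mu -> rayleigh_value (- A) (- mu).
Proof. by case=> x x_neq0 xA; exists x; rewrite // bilinN xA mulNr. Qed.

Lemma eigenvalue_rayleigh A mu : eigenvalue A mu -> rayleigh_value A mu.
Proof.
by case/eigenvalueP => x xA x_neq0; exists x; rewrite // /bilin xA mulmx1 -scalemxAl mxE.
Qed.

End RealRayleigh.

Lemma eigenvalue_spectral_diag (C : numClosedFieldType) n (A : 'M[C]_n) i :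
  A \is normalmx -> eigenvalue A (spectral_diag A 0 i).
Proof.
move=> /orthomx_spectralP A_diag.
set P := spectralmx A in A_diag *; set d := spectral_diag A in A_diag *.
have P_unitary : P \is unitarymx := spectral_unitarymx A.
apply/eigenvalueP; exists (row i P).
  rewrite A_diag !mulmxA -row_mul mulmxV ?unitarymx_unit // row1 -rowE row_diag_mx.
  by rewrite -scalemxAl -rowE.
apply: contra_neq (@oner_neq0 C) => P_i.
have := @row1 C n i; rewrite -(unitarymxP P_unitary) row_mul P_i mul0mx.
by move/rowP/(_ i); rewrite !mxE !eqxx.
Qed.

Section Spectral.
Variable R : rcfType.
Local Open Scope complex_scope.
Local Open Scope sesquilinear_scope.

Lemma hermitian_rayleigh_max n (A : 'M[R[i]]_n) : (0 < n)%N -> A \is hermsymmx ->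
  exists q : R, eigenvalue A q%:C /\
    forall x : 'rV_n, (x *m A *m x^t*) 0 0 <= q%:C * (x *m x^t*) 0 0.
Proof.
move=> n_gt0 A_herm; have A_normal := hermitian_normalmx A_herm.
have /orthomx_spectralP A_diag := A_normal.
set P := spectralmx A in A_diag; set d := spectral_diag A in A_diag.
have P_unitary : P \is unitarymx := spectral_unitarymx A.
have d_real i : d 0 i = (complex.Re (d 0 i))%:C.
  by rewrite RRe_real // (mxOverP (hermitian_spectral_diag_real A_herm)).
have [i0 _ d_max] :=
  @arg_maxP _ _ _ (Ordinal n_gt0) xpredT (fun i => complex.Re (d 0 i)) isT.
exists (complex.Re (d 0 i0)); split; first by rewrite -d_real eigenvalue_spectral_diag.
(* In the coordinates y of x in the orthonormal eigenbasis both forms are diagonal. *)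
move=> x; set y := x *m P^t*.
have -> : (x *m A *m x^t*) 0 0 = (y *m diag_mx d *m y^t*) 0 0.
  by rewrite A_diag invmx_unitary // /y trmx_mul map_mxM trmxCK !mulmxA.
have -> : (x *m x^t*) 0 0 = (y *m y^t*) 0 0.
  rewrite /y trmx_mul map_mxM trmxCK mulmxA -(mulmxA x).
  by rewrite -invmx_unitary // mulVmx ?unitarymx_unit // mulmx1.
rewrite mul_mx_diag !mxE big_distrr /=; apply: ler_sum => k _.
rewrite !mxE d_real -subr_ge0 mulrAC [X in _ - X]mulrC -mulrBl.
by rewrite mulr_ge0 ?mul_conjC_ge0 // subr_ge0 lecR; apply: d_max.
Qed.

Lemma symmetric_rayleigh_max n (A : 'M[R]_n) : (0 < n)%N -> A^T = A ->
  exists q, eigenvalue A q /\ forall x, bilin A x x <= q * bilin 1%:M x x.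
Proof.
move=> n_gt0 A_sym; set f := real_complex R.
have real_f r : f r \is Num.real by apply/complex_realP; exists r.
have Af_herm : map_mx f A \is hermsymmx.
  apply: realsym_hermsym; last by apply/mxOverP => i j; rewrite mxE.
  by apply/is_hermitianmxP; rewrite expr0 scale1r map_mx_id // map_trmx A_sym.
have [q [eig_q q_ub]] := hermitian_rayleigh_max n_gt0 Af_herm.
exists q; split; first by rewrite -(eigenvalue_map f).
move=> x; have := q_ub (map_mx f x).
have xf_adj : (map_mx f x)^t* = map_mx f x^T.
  by apply/matrixP => i j; rewrite !mxE conj_Creal.
by rewrite xf_adj -!map_mxM /bilin mulmx1 !mxE -rmorphM lecR.
Qed.

End Spectral.

Section ExtremalEigenvalues.
Variables (R : realType) (n : nat).
Hypothesis n_gt0 : (0 < n)%N.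

Lemma symmetric_largest_eig (A : 'M[R]_n) : A^T = A ->
  exists q, largest_eig A q /\ forall mu, rayleigh_value A mu -> mu <= q.
Proof.
move=> A_sym; have [q [eig_q q_ub]] := symmetric_rayleigh_max n_gt0 A_sym.
have q_max mu : rayleigh_value A mu -> mu <= q := rayleigh_le q_ub.
by exists q; split=> //; split=> // mu /eigenvalue_rayleigh/q_max.
Qed.

Lemma symmetric_least_eig (A : 'M[R]_n) : A^T = A ->
  exists q, least_eig A q /\ forall mu, rayleigh_value A mu -> q <= mu.
Proof.
move=> A_sym; have NA_sym : (- A)^T = - A by rewrite linearN /= A_sym.
have [q [[eig_q q_max] q_ub]] := symmetric_largest_eig NA_sym.
exists (- q); split; last by move=> mu /rayleigh_valueN/q_ub; rewrite lerNl.
split; first by rewrite -eigenvalue_opp opprK.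
by move=> mu; rewrite -eigenvalue_opp => /q_max; rewrite lerNl.
Qed.

End ExtremalEigenvalues.

Section GraphDistance.
Variables (n : nat) (adj : rel 'I_n).
Implicit Types (u v w : 'I_n).

Lemma walk_len0 u v : walk_len adj 0 u v = (u == v).
Proof.
apply/existsP/idP => [[p]|/eqP ->]; last by exists [tuple]; rewrite /= eqxx.
by rewrite tuple0 /= eq_sym.
Qed.

Lemma walk_len1 u v : walk_len adj 1 u v = adj u v.
Proof.
apply/existsP/idP => [[p]|uv]; last by exists [tuple v]; rewrite /= uv !eqxx.
by case: p / tupleP => w p; rewrite tuple0 /= andbT => /andP[uw /eqP <-].
Qed.

Lemma gdistE m u v : (m < n)%N -> walk_len adj m u v ->
  (forall k, (k < m)%N -> ~~ walk_len adj k u v) -> gdist adj u v = m.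
Proof.
move=> lt_mn walk_m no_shorter.
rewrite /gdist; have -> : iota 0 n = iota 0 m ++ iota m (n - m).
  by rewrite -iotaD subnKC // ltnW.
rewrite find_cat size_iota.
have -> : has (fun k => walk_len adj k u v) (iota 0 m) = false.
  by apply/hasPn => k; rewrite mem_iota => /andP[_ lt_km]; exact: no_shorter.
by rewrite -(subnSK lt_mn) /= walk_m addn0.
Qed.

Lemma gdist_eq0 u v : (gdist adj u v == 0)%N = (u == v).
Proof.
have n_gt0 : (0 < n)%N := leq_ltn_trans (leq0n u) (ltn_ord u).
apply/eqP/eqP => [|<-]; last by apply: gdistE; rewrite ?walk_len0.
rewrite /gdist.
have [walk_uv|no_walk] := boolP (has (fun k => walk_len adj k u v) (iota 0 n)).
  by move=> find0; move: (nth_find 0 walk_uv); rewrite find0 nth_iota // walk_len0 => /eqP.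
by rewrite (hasNfind no_walk) size_iota => n0; move: n_gt0; rewrite [X in (0 < X)%N]n0.
Qed.

Lemma gdist_ii u : gdist adj u u = 0%N.
Proof. by apply/eqP; rewrite gdist_eq0. Qed.

Hypothesis adj_sym : symmetric adj.

Lemma walk_len_sym m u v : walk_len adj m u v = walk_len adj m v u.
Proof.
suff walk_rev x y : walk_len adj m x y -> walk_len adj m y x.
  by apply/idP/idP; apply: walk_rev.
case/existsP => p /andP[p_path /eqP p_last]; apply/existsP.
have size_p : size (rev (belast x p)) == m by rewrite size_rev size_belast size_tuple.
exists (Tuple size_p) => /=; apply/andP; split.
  by rewrite -p_last rev_path; apply: sub_path p_path => a b /=; rewrite adj_sym.
by move: p_last; case: (tval p) => [|z s] /= <- //; rewrite rev_cons last_rcons.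
Qed.

Lemma gdist_sym u v : gdist adj u v = gdist adj v u.
Proof. by apply: eq_find => m; rewrite walk_len_sym. Qed.

Hypothesis adj_irr : irreflexive adj.

Lemma gdist_adj u v : adj u v -> gdist adj u v = 1%N.
Proof.
move=> uv; have u_neq_v : u != v by apply: contraTneq uv => ->; rewrite adj_irr.
apply: gdistE => [|| [|//] _].
- by move: u_neq_v; rewrite -val_eqE /=; have := ltn_ord u; have := ltn_ord v; lia.
- by rewrite walk_len1.
- by rewrite walk_len0.
Qed.

Definition cnbhd v : {set 'I_n} := v |: [set w | adj v w].

Lemma card_cnbhd v : #|cnbhd v| = (deg adj v).+1.
Proof. by rewrite cardsU1 inE adj_irr. Qed.

Hypothesis adj_bip : bipartite_graph adj.

Lemma gdist_common_neighbour w u v :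
  adj w u -> adj w v -> u != v -> gdist adj u v = 2%N.
Proof.
move=> wu wv u_neq_v; have [A A_bip] := adj_bip.
have w_neq_u : w != u by apply: contraTneq wu => ->; rewrite adj_irr.
have w_neq_v : w != v by apply: contraTneq wv => ->; rewrite adj_irr.
apply: gdistE => [|| [|[|//]] _].
- move: u_neq_v w_neq_u w_neq_v; rewrite -!val_eqE /=.
  by have := ltn_ord u; have := ltn_ord v; have := ltn_ord w; lia.
- by apply/existsP; exists [tuple w; v]; rewrite /= adj_sym wu wv !eqxx.
- by rewrite walk_len0.
rewrite walk_len1; apply/negP => uv.
by move: (A_bip _ _ wu) (A_bip _ _ wv) (A_bip _ _ uv); do 3!case: (_ \in A).
Qed.

End GraphDistance.

Section DistanceSignlessLaplacian.
Variables (R : realType) (n : nat) (adj : rel 'I_n).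
Hypotheses (adj_sym : symmetric adj) (adj_irr : irreflexive adj).
Local Notation Q := (distQ R adj).
Local Notation D := (transmission R adj).

Definition distmx : 'M[R]_n := \matrix_(i, j) (gdist adj i j)%:R.

Lemma distQ_diag_distmx : Q = diag_mx (\row_i D i) + distmx.
Proof. by apply/matrixP => i j; rewrite !mxE mulr_natl. Qed.

Lemma distQ_tr : Q^T = Q.
Proof.
rewrite distQ_diag_distmx linearD /= tr_diag_mx; congr (_ + _).
by apply/matrixP => i j; rewrite !mxE (gdist_sym adj_sym).
Qed.

Lemma blocksum_distQ X Y :
  blocksum Q X Y = \sum_(i in X :&: Y) D i + blocksum distmx X Y.
Proof.
rewrite distQ_diag_distmx blocksumD blocksum_diag; congr (_ + _).
by apply: eq_bigr => i _; rewrite mxE.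
Qed.

Lemma blocksum_distmx_setT X : blocksum distmx X setT = \sum_(i in X) D i.
Proof.
apply: eq_bigr => i _; rewrite (eq_bigl predT) => [|j]; last by rewrite in_setT.
by rewrite (bigD1 i) //= mxE gdist_ii add0r; apply: eq_bigr => j _; rewrite mxE.
Qed.

Lemma blocksum_distQ_setT X : blocksum Q X setT = 2 * \sum_(i in X) D i.
Proof. by rewrite blocksum_distQ setIT blocksum_distmx_setT mulr2n mulrDl mul1r. Qed.

Lemma sum_transmission : \sum_i D i = 2 * wiener R adj.
Proof.
have split_ne i : \sum_(j | j != i) (gdist adj i j)%:R =
    \sum_(j : 'I_n | (i < j)%N) (gdist adj i j)%:R
    + \sum_(j : 'I_n | (j < i)%N) (gdist adj i j)%:R :> R.
  rewrite (bigID (fun j : 'I_n => (i < j)%N)) /=; congr (_ + _); apply: eq_bigl => j.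
    by rewrite andb_idl // => /ltn_eqF; rewrite -val_eqE eq_sym => ->.
  by rewrite -leqNgt ltn_neqAle -val_eqE.
rewrite /transmission /wiener mulr2n mulrDl mul1r.
under eq_bigr => i _ do rewrite split_ne.
rewrite big_split /=; congr (_ + _); rewrite (exchange_big_dep xpredT) //=.
by apply: eq_bigr => j _; apply: eq_bigr => i _; rewrite gdist_sym.
Qed.

Lemma sum_transmission_nbhd v :
  \sum_(i in [set w | adj v w]) D i = (deg adj v)%:R * tv R adj v.
Proof.
rewrite /tv mulrA (eq_bigl (adj v)) => [|i]; last by rewrite inE.
have [deg0|deg_gt0] := posnP (deg adj v); last by rewrite mulfV ?mul1r // pnatr_eq0 -lt0n.
rewrite deg0 big_pred0 ?mulr0 // => i; apply/negP => vi.
by move/eqP: deg0; rewrite /deg cards_eq0 => /eqP/setP/(_ i); rewrite !inE vi.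
Qed.

Hypothesis adj_bip : bipartite_graph adj.

Lemma blocksum_distmx_cnbhd v :
  blocksum distmx (cnbhd adj v) (cnbhd adj v) = 2 * (deg adj v)%:R ^+ 2.
Proof.
set N := [set w | adj v w].
have v_notin_N : v \notin N by rewrite inE adj_irr.
have card_N : #|N|%:R = (deg adj v)%:R :> R by [].
have row_v : \sum_(j in cnbhd adj v) distmx v j = (deg adj v)%:R.
  rewrite big_setU1 //= mxE gdist_ii add0r -card_N -sumr_const.
  by apply: eq_bigr => j; rewrite inE mxE => /(gdist_adj adj_irr) ->.
have row_N i : i \in N -> \sum_(j in cnbhd adj v) distmx i j = 2 * (deg adj v)%:R - 1.
  move=> Ni; have vi : adj v i by rewrite inE in Ni.
  rewrite big_setU1 //= (big_setD1 i) //= !mxE gdist_ii (gdist_sym adj_sym).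
  rewrite (gdist_adj adj_irr) // add0r (eq_bigr (fun=> 2)) => [|j]; last first.
    rewrite !inE mxE => /andP[j_neq_i vj].
    by rewrite (gdist_common_neighbour adj_sym adj_irr adj_bip vi vj) // eq_sym.
  rewrite sumr_const -card_N (cardsD1 i N) Ni natrD -mulr_natl; ring.
rewrite /blocksum big_setU1 //= row_v (eq_bigr _ row_N) sumr_const card_N -mulr_natr; ring.
Qed.

Lemma blocksum_distQ_gt0 (X Y : {set 'I_n}) u w :
  u \in X -> w \in Y -> u != w -> 0 < blocksum Q X Y.
Proof.
move=> Xu Yw u_neq_w.
have Q_ge0 i j : 0 <= Q i j by rewrite mxE addr_ge0 ?mulr_ge0 ?sumr_ge0.
have Quw_gt0 : 0 < Q u w by rewrite mxE (negbTE u_neq_w) mul0r add0r ltr0n lt0n gdist_eq0.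
apply: (lt_le_trans Quw_gt0); rewrite /blocksum (bigD1 u) //= (bigD1 w) //= -addrA lerDl.
by rewrite addr_ge0 ?sumr_ge0 // => i _; rewrite sumr_ge0.
Qed.

Lemma distQ_cnbhd_blocks v :
  let X := cnbhd adj v in let d := (deg adj v)%:R in
  let S := D v + d * tv R adj v in
  [/\ blocksum Q X X = S + 2 * d ^+ 2, blocksum Q X (~: X) = S - 2 * d ^+ 2
    & blocksum Q (~: X) (~: X) = 4 * wiener R adj - 3 * S + 2 * d ^+ 2].
Proof.
move=> X d S.
have sumD_X : \sum_(i in X) D i = S.
  by rewrite big_setU1 ?inE ?adj_irr //= sum_transmission_nbhd.
have split_X := blocksum_setCr Q X X.
have split_XC := blocksum_setCr Q (~: X) X.
have split_T := blocksum_setCl Q X setT.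
have s21E : blocksum Q (~: X) X = blocksum Q X (~: X) by rewrite -{1}distQ_tr blocksum_tr.
have total : blocksum Q setT setT = 4 * wiener R adj.
  rewrite blocksum_distQ_setT (eq_bigl predT) => [|i]; last by rewrite in_setT.
  by rewrite sum_transmission mulrA -natrM.
have s11E : blocksum Q X X = S + 2 * d ^+ 2.
  by rewrite blocksum_distQ setIid sumD_X blocksum_distmx_cnbhd.
have rowX_sum : blocksum Q X setT = 2 * S by rewrite blocksum_distQ_setT sumD_X.
split; lra.
Qed.

Lemma distQ_block_rayleigh (X : {set 'I_n}) u w mu : u \in X -> w \notin X ->
  block_charpoly #|X|%:R #|~: X|%:R
    (blocksum Q X X) (blocksum Q X (~: X)) (blocksum Q (~: X) (~: X)) mu = 0 ->
  rayleigh_value Q mu.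
Proof.
move=> Xu Xw root_mu.
have u_neq_w : u != w by apply: contraTneq Xu => ->.
have s12_gt0 : 0 < blocksum Q X (~: X).
  by apply: blocksum_distQ_gt0 Xu _ u_neq_w; rewrite inE.
exists (blockvec X (blocksum Q X (~: X)) (mu * #|X|%:R - blocksum Q X X)).
  by apply: blockvec_neq0 Xu _; rewrite gt_eqF.
exact: blockvec_rayleigh distQ_tr root_mu.
Qed.

Lemma distQ_cnbhd_rayleigh_roots v : ((deg adj v).+1 < n)%N ->
  let d := (deg adj v)%:R in let W := wiener R adj in let nr : R := n%:R in
  let a := 4 * (W - D v - tv R adj v * d) * (d + 1) + 2 * nr * d ^+ 2
    + nr * D v + nr * tv R adj v * d in
  let b := 4 * D v ^+ 2 + 8 * D v * tv R adj v * d + 4 * tv R adj v ^+ 2 * d ^+ 2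
    - 8 * W * d ^+ 2 - 4 * W * D v - 4 * W * tv R adj v * d in
  let c := (1 + d) * (nr - d - 1) in
  let s := Num.sqrt (a ^+ 2 + 4 * b * c) in
  rayleigh_value Q ((a + s) / (2 * c)) /\ rayleigh_value Q ((a - s) / (2 * c)).
Proof.
move=> deg_lt d W nr a b c s; set X := cnbhd adj v.
have [s11E s12E s22E] := distQ_cnbhd_blocks v.
have card_X : #|X|%:R = d + 1 :> R by rewrite card_cnbhd // -addn1 natrD.
have card_XC : #|~: X|%:R = nr - d - 1 :> R.
  by apply: (addrI #|X|%:R); rewrite -natrD cardsC card_ord card_X; ring.
have [w Xw] : exists w, w \notin X.
  have : (0 < #|~: X|)%N by rewrite -(ltn_add2l #|X|) addn0 cardsC card_ord card_cnbhd.
  by case/card_gt0P => w; rewrite inE; exists w.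
have pr_gt0 : 0 < #|X|%:R * #|~: X|%:R :> R.
  by rewrite mulr_gt0 // ltr0n ?card_cnbhd //; apply/card_gt0P; exists w; rewrite inE.
have [root_plus root_minus] := block_charpoly_roots
  (blocksum Q X X) (blocksum Q X (~: X)) (blocksum Q (~: X) (~: X)) pr_gt0.
have aE : #|~: X|%:R * blocksum Q X X + #|X|%:R * blocksum Q (~: X) (~: X) = a.
  by rewrite card_X card_XC s11E s22E /a /d /W /nr; ring.
have bE : blocksum Q X (~: X) ^+ 2 - blocksum Q X X * blocksum Q (~: X) (~: X) = b.
  by rewrite s11E s12E s22E /b /d /W; ring.
have cE : #|X|%:R * #|~: X|%:R = c by rewrite card_X card_XC /c; ring.
rewrite aE bE cE in root_plus root_minus.
by split; apply: distQ_block_rayleigh (setU11 _ _) Xw _.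
Qed.

End DistanceSignlessLaplacian.

Theorem corollary4p2 (R : realType) (n : nat) (adj : rel 'I_n)
  (k : nat) (v : 'I_k -> 'I_n) :
  simple_graph adj -> connected_graph adj -> bipartite_graph adj ->
  (3 <= n)%N -> (max_deg adj <= n - 2)%N ->
  (1 <= k)%N -> injective v ->
  (forall i, deg adj (v i) = max_deg adj) ->
  let Dl : R := (max_deg adj)%:R in
  let W : R := wiener R adj in
  let nr : R := n%:R in
  let a := fun i : 'I_k =>
    4 * (W - transmission R adj (v i) - tv R adj (v i) * Dl) * (Dl + 1)
    + 2 * nr * Dl ^+ 2 + nr * transmission R adj (v i)
    + nr * tv R adj (v i) * Dl in
  let b := fun i : 'I_k =>
    4 * transmission R adj (v i) ^+ 2
    + 8 * transmission R adj (v i) * tv R adj (v i) * Dl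
    + 4 * tv R adj (v i) ^+ 2 * Dl ^+ 2 - 8 * W * Dl ^+ 2
    - 4 * W * transmission R adj (v i) - 4 * W * tv R adj (v i) * Dl in
  let c : R := (1 + Dl) * (nr - Dl - 1) in
  (exists q, largest_eig (distQ R adj) q /\
     forall i, (a i + Num.sqrt (a i ^+ 2 + 4 * b i * c)) / (2 * c) <= q) /\
  (exists q, least_eig (distQ R adj) q /\
     forall i, q <= (a i - Num.sqrt (a i ^+ 2 + 4 * b i * c)) / (2 * c)).
Proof.
move=> [adj_sym adj_irr] _ adj_bip n_ge3 max_deg_le _ _ deg_v Dl W nr a b c.
have n_gt0 : (0 < n)%N := ltnW (ltnW n_ge3).
have [qM [qM_largest qM_ub]] := symmetric_largest_eig n_gt0 (distQ_tr R adj_sym).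
have [qm [qm_least qm_lb]] := symmetric_least_eig n_gt0 (distQ_tr R adj_sym).
have roots i := @distQ_cnbhd_rayleigh_roots R _ _ adj_sym adj_irr adj_bip (v i).
have deg_lt i : ((deg adj (v i)).+1 < n)%N by rewrite deg_v; lia.
split; [exists qM | exists qm]; split=> // i;
  have := roots i (deg_lt i); rewrite deg_v => -[root_plus root_minus].
- exact: qM_ub.
- exact: qm_lb.
Qed.
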